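(* Let $f:[0,1]\to\mathbb{R}$ be bounded and let $0<a<b<1$. Assume that $f(t)=c$ for all $t\in(a,b)$, for some real constant $c$. Then for every $n\in\mathbb{N}$ and every $x\in(a,b)$, \[ |B_nf(x)-f(x)|\leq \|f-c\|\left(e^{-nr(x,a)}+e^{-nr(x,b)}\right). \]
   Context: For a bounded function $f:[0,1]\to\mathbb{R}$, $\|f\|=\sup_{t\in[0,1]}|f(t)|$, and $\|f-c\|$ is the supremum norm of $t\mapsto f(t)-c$. The $n$th Bernstein polynomial of $f$ is $B_nf(x)=\sum_{j=0}^n f(j/n)\binom{n}{j}x^j(1-x)^{n-j}$, $x\in[0,1]$. For $x,\theta\in(0,1)$, $r(x,\theta)=\theta\log\frac{\theta}{x}+(1-\theta)\log\frac{1-\theta}{1-x}$ (the Kullback–Leibler divergence between Bernoulli distributions with success probabilities $\theta$ and $x$). *)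

From Stdlib Require Import Reals.
From Coquelicot Require Import Coquelicot.
Open Scope R_scope.

Definition bounded01 (f : R -> R) : Prop :=
  exists M : R, forall t : R, 0 <= t <= 1 -> Rabs (f t) <= M.

Definition supnorm_shift (f : R -> R) (c : R) : R :=
  real (Lub_Rbar (fun y => exists t : R, 0 <= t <= 1 /\ y = Rabs (f t - c))).

Definition bernstein (n : nat) (f : R -> R) (x : R) : R :=
  sum_f_R0 (fun j => f (INR j / INR n) * Binomial.C n j * x ^ j * (1 - x) ^ (n - j)) n.

Definition kl (x theta : R) : R :=
  theta * ln (theta / x) + (1 - theta) * ln ((1 - theta) / (1 - x)).

From Stdlib Require Import Reals Lra Lia.
From Coquelicot Require Import Coquelicot.
Open Scope R_scope.

(* Since the Bernstein weights sum to one, B_n f(x) - c is the weighted sum of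
   the f(j/n) - c, and the nodes j/n inside (a, b) contribute nothing. What is
   left is at most ||f - c|| times the two binomial tail probabilities
   P(S <= n a) and P(S >= n b) for S ~ Bin(n, x), and Chernoff's bound with the
   optimal exponential tilt bounds each tail by exp(-n r(x, .)). *)

Lemma supnorm_shift_ge (f : R -> R) (c t : R) :
  bounded01 f -> 0 <= t <= 1 -> Rabs (f t - c) <= supnorm_shift f c.
Proof.
  intros [M HM] Ht.
  unfold supnorm_shift.
  set (E := fun y => exists t : R, 0 <= t <= 1 /\ y = Rabs (f t - c)).
  destruct (Lub_Rbar_correct E) as [Hub Hlub].
  assert (Hle : Rbar_le (Rabs (f t - c)) (Lub_Rbar E)) by (apply Hub; now exists t).
  assert (Hfin : Rbar_le (Lub_Rbar E) (M + Rabs c)).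
  { apply Hlub. intros y [s [Hs ->]]. simpl.
    pose proof (HM s Hs). pose proof (Rabs_triang (f s) (- c)).
    rewrite Rabs_Ropp in *. unfold Rminus. lra. }
  destruct (Lub_Rbar E); simpl in *; tauto.
Qed.

Lemma supnorm_shift_ge0 (f : R -> R) (c : R) :
  bounded01 f -> 0 <= supnorm_shift f c.
Proof.
  intros Hf. apply Rle_trans with (Rabs (f 0 - c)); [apply Rabs_pos |].
  apply supnorm_shift_ge; [exact Hf | lra].
Qed.

Definition bernstein_basis (n : nat) (x : R) (j : nat) : R :=
  Binomial.C n j * x ^ j * (1 - x) ^ (n - j).

Lemma binomial_C_ge0 (n j : nat) : 0 <= Binomial.C n j.
Proof.
  unfold Binomial.C. apply Rmult_le_pos; [apply pos_INR |].
  left. apply Rinv_0_lt_compat, Rmult_lt_0_compat; apply INR_fact_lt_0.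
Qed.

Lemma bernstein_basis_ge0 (n : nat) (x : R) (j : nat) :
  0 <= x <= 1 -> 0 <= bernstein_basis n x j.
Proof.
  intros Hx. unfold bernstein_basis.
  apply Rmult_le_pos; [apply Rmult_le_pos; [apply binomial_C_ge0 |] |];
    apply pow_le; lra.
Qed.

Lemma sum_bernstein_basis (n : nat) (x : R) :
  sum_f_R0 (bernstein_basis n x) n = 1.
Proof.
  unfold bernstein_basis. rewrite <- binomial.
  replace (x + (1 - x)) with 1 by ring. apply pow1.
Qed.

Lemma bernstein_sub_const (n : nat) (f : R -> R) (c x : R) :
  bernstein n f x - c
  = sum_f_R0 (fun j => (f (INR j / INR n) - c) * bernstein_basis n x j) n.
Proof.
  rewrite <- (Rmult_1_r c) at 1. rewrite <- (sum_bernstein_basis n x).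
  unfold bernstein. rewrite scal_sum, <- minus_sum.
  apply sum_eq. intros j _. unfold bernstein_basis. ring.
Qed.

Lemma exp_INR_mul (n : nat) (y : R) : exp (INR n * y) = exp y ^ n.
Proof.
  induction n as [| n IH].
  - now rewrite Rmult_0_l, exp_0.
  - rewrite S_INR, Rmult_plus_distr_r, Rmult_1_l, exp_plus, IH. simpl. ring.
Qed.

Lemma sum_exp_bernstein_basis (n : nat) (x l : R) :
  sum_f_R0 (fun j => exp (l * INR j) * bernstein_basis n x j) n
  = (x * exp l + (1 - x)) ^ n.
Proof.
  rewrite binomial. apply sum_eq. intros j _. unfold bernstein_basis.
  rewrite (Rmult_comm l), exp_INR_mul, Rpow_mult_distr. ring.
Qed.

Lemma chernoff_bound (w : nat -> R) (n : nat) (x l th : R) :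
  0 <= x <= 1 ->
  (forall j, w j <= exp (l * (INR j - INR n * th))) ->
  sum_f_R0 (fun j => w j * bernstein_basis n x j) n
  <= exp (- l * INR n * th) * (x * exp l + (1 - x)) ^ n.
Proof.
  intros Hx Hw.
  rewrite <- sum_exp_bernstein_basis, scal_sum.
  apply sum_Rle. intros j _.
  replace (exp (l * INR j) * bernstein_basis n x j * exp (- l * INR n * th))
    with (exp (l * (INR j - INR n * th)) * bernstein_basis n x j)
    by (replace (l * (INR j - INR n * th)) with (l * INR j + - l * INR n * th) by ring;
        rewrite exp_plus; ring).
  apply Rmult_le_compat_r; [apply bernstein_basis_ge0 | apply Hw]; assumption.
Qed.

(* The minimiser over l of exp(-l n th) (x e^l + 1 - x)^n. *)
Definition chernoff_param (x th : R) : R :=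
  ln (th * (1 - x) / (x * (1 - th))).

Lemma chernoff_bound_at_param (n : nat) (x th : R) :
  0 < x < 1 -> 0 < th < 1 ->
  exp (- chernoff_param x th * INR n * th)
    * (x * exp (chernoff_param x th) + (1 - x)) ^ n
  = exp (- INR n * kl x th).
Proof.
  intros Hx Hth. unfold chernoff_param.
  rewrite exp_ln by (apply Rdiv_lt_0_compat; apply Rmult_lt_0_compat; lra).
  replace (x * (th * (1 - x) / (x * (1 - th))) + (1 - x))
    with (exp (ln ((1 - x) / (1 - th))))
    by (rewrite exp_ln by (apply Rdiv_lt_0_compat; lra); field; lra).
  rewrite <- exp_INR_mul, <- exp_plus. f_equal.
  unfold kl.
  rewrite !ln_div, !ln_mult by (try apply Rmult_lt_0_compat; lra).
  ring.
Qed.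

Lemma chernoff_param_neg (x th : R) :
  0 < th -> th < x -> x < 1 -> chernoff_param x th < 0.
Proof.
  intros Hth Hthx Hx. unfold chernoff_param. rewrite <- ln_1.
  apply ln_increasing.
  - apply Rdiv_lt_0_compat; apply Rmult_lt_0_compat; lra.
  - apply Rlt_div_l; nra.
Qed.

Lemma chernoff_param_pos (x th : R) :
  0 < x -> x < th -> th < 1 -> 0 < chernoff_param x th.
Proof.
  intros Hx Hxth Hth. unfold chernoff_param. rewrite <- ln_1.
  apply ln_increasing; [lra |].
  apply Rlt_div_r; nra.
Qed.

Definition le_ind (u v : R) : R := if Rle_dec u v then 1 else 0.

Lemma le_ind_le_exp (u v l : R) : 0 <= l -> le_ind u v <= exp (l * (v - u)).
Proof.
  intros Hl. unfold le_ind. destruct (Rle_dec u v) as [Huv | _].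
  - pose proof (exp_ineq1_le (l * (v - u))). nra.
  - left. apply exp_pos.
Qed.

Lemma lower_tail_bound (n : nat) (x th : R) :
  0 < th -> th < x -> x < 1 ->
  sum_f_R0 (fun j => le_ind (INR j) (INR n * th) * bernstein_basis n x j) n
  <= exp (- INR n * kl x th).
Proof.
  intros Hth Hthx Hx.
  pose proof (chernoff_param_neg x th Hth Hthx Hx).
  rewrite <- chernoff_bound_at_param by lra.
  apply chernoff_bound; [lra |]. intros j.
  replace (chernoff_param x th * (INR j - INR n * th))
    with (- chernoff_param x th * (INR n * th - INR j)) by ring.
  apply le_ind_le_exp. lra.
Qed.

Lemma upper_tail_bound (n : nat) (x th : R) :
  0 < x -> x < th -> th < 1 ->
  sum_f_R0 (fun j => le_ind (INR n * th) (INR j) * bernstein_basis n x j) n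
  <= exp (- INR n * kl x th).
Proof.
  intros Hx Hxth Hth.
  pose proof (chernoff_param_pos x th Hx Hxth Hth).
  rewrite <- chernoff_bound_at_param by lra.
  apply chernoff_bound; [lra |]. intros j.
  apply le_ind_le_exp. lra.
Qed.

Lemma node_in_unit (n j : nat) : (j <= n)%nat -> 0 <= INR j / INR n <= 1.
Proof.
  intros Hj. destruct (Nat.eq_dec n 0) as [-> | Hn].
  - replace j with 0%nat by lia. simpl. unfold Rdiv. rewrite Rmult_0_l. lra.
  - assert (0 < INR n) by (apply lt_0_INR; lia).
    pose proof (le_INR _ _ Hj).
    pose proof (pos_INR j).
    split; [apply Rdiv_le_0_compat | apply Rle_div_l]; lra.
Qed.

Lemma node_deviation_le (f : R -> R) (a b c : R) (n j : nat) :
  bounded01 f -> 0 < a ->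
  (forall t : R, a < t < b -> f t = c) ->
  (j <= n)%nat ->
  Rabs (f (INR j / INR n) - c)
  <= supnorm_shift f c * (le_ind (INR j) (INR n * a) + le_ind (INR n * b) (INR j)).
Proof.
  intros Hf Ha Hc Hj.
  assert (Hdev := supnorm_shift_ge f c _ Hf (node_in_unit n j Hj)).
  assert (HS := supnorm_shift_ge0 f c Hf).
  unfold le_ind.
  destruct (Rle_dec (INR j) (INR n * a)) as [Hla | Hla],
           (Rle_dec (INR n * b) (INR j)) as [Hub | Hub]; try nra.
  assert (Hn : 0 < INR n).
  { destruct n; [| apply lt_0_INR; lia].
    replace j with 0%nat in Hla by lia. simpl in Hla. lra. }
  rewrite Hc.
  - rewrite Rminus_diag, Rabs_R0. lra.
  - split; [apply Rlt_div_r | apply Rlt_div_l]; lra.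
Qed.

Theorem theorem1 (f : R -> R) (a b c : R) :
  bounded01 f ->
  0 < a -> a < b -> b < 1 ->
  (forall t : R, a < t < b -> f t = c) ->
  forall (n : nat) (x : R), a < x < b ->
    Rabs (bernstein n f x - f x)
      <= supnorm_shift f c * (exp (- INR n * kl x a) + exp (- INR n * kl x b)).
Proof.
  intros Hf Ha Hab Hb Hc n x Hx.
  rewrite (Hc x Hx), bernstein_sub_const.
  eapply Rle_trans; [apply Rsum_abs |].
  eapply Rle_trans with
    (supnorm_shift f c
     * (sum_f_R0 (fun j => le_ind (INR j) (INR n * a) * bernstein_basis n x j) n
        + sum_f_R0 (fun j => le_ind (INR n * b) (INR j) * bernstein_basis n x j) n)).
  - rewrite <- plus_sum, scal_sum. apply sum_Rle. intros j Hj.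
    assert (Hbasis : 0 <= bernstein_basis n x j) by (apply bernstein_basis_ge0; lra).
    rewrite Rabs_mult, (Rabs_pos_eq _ Hbasis).
    replace ((le_ind (INR j) (INR n * a) * bernstein_basis n x j
              + le_ind (INR n * b) (INR j) * bernstein_basis n x j) * supnorm_shift f c)
      with (supnorm_shift f c * (le_ind (INR j) (INR n * a) + le_ind (INR n * b) (INR j))
            * bernstein_basis n x j) by ring.
    apply Rmult_le_compat_r; [exact Hbasis |].
    now apply node_deviation_le.
  - apply Rmult_le_compat_l; [now apply supnorm_shift_ge0 |].
    apply Rplus_le_compat; [apply lower_tail_bound | apply upper_tail_bound]; lra.
Qed.
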